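(* Let $(L,\varphi,\xi,\eta,g)$ be the 3-dimensional almost contact B-metric Lie group described in the context. For each $s\in\{1,4,5,8,9,10,11\}$, $(L,\varphi,\xi,\eta,g)$ belongs to the class $\mathcal{F}_s$ if and only if there exist real numbers $\alpha,\beta$ such that the Lie algebra $\mathfrak l$ is given by the corresponding commutators: $\mathcal{F}_1$: $[E_0,E_1]=[E_0,E_2]=0$, $[E_1,E_2]=\alpha E_1+\beta E_2$; $\mathcal{F}_4$: $[E_0,E_1]=\alpha E_2$, $[E_0,E_2]=-\alpha E_1$, $[E_1,E_2]=0$; $\mathcal{F}_5$: $[E_0,E_1]=\alpha E_1$, $[E_0,E_2]=\alpha E_2$, $[E_1,E_2]=0$; $\mathcal{F}_8$: $[E_0,E_1]=\alpha E_2$, $[E_0,E_2]=\alpha E_1$, $[E_1,E_2]=-2\alpha E_0$; $\mathcal{F}_9$: $[E_0,E_1]=\alpha E_1$, $[E_0,E_2]=-\alpha E_2$, $[E_1,E_2]=0$; $\mathcal{F}_{10}$: $[E_0,E_1]=\alpha E_2$, $[E_0,E_2]=\alpha E_1$, $[E_1,E_2]=0$; $\mathcal{F}_{11}$: $[E_0,E_1]=\alpha E_0$, $[E_0,E_2]=\beta E_0$, $[E_1,E_2]=0$.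
   Context: Let $L$ be a 3-dimensional real connected Lie group with Lie algebra $\mathfrak l$, and let $\{E_0,E_1,E_2\}$ be a basis of left-invariant vector fields, with $[E_i,E_j]=C_{ij}^kE_k$. Define the left-invariant almost contact structure $(\varphi,\xi,\eta)$ by $\varphi E_0=0$, $\varphi E_1=E_2$, $\varphi E_2=-E_1$, $\xi=E_0$, $\eta(E_0)=1$, $\eta(E_1)=\eta(E_2)=0$, and the left-invariant pseudo-Riemannian metric $g$ by $g(E_0,E_0)=g(E_1,E_1)=-g(E_2,E_2)=1$, $g(E_i,E_j)=0$ for $i\neq j$. Then $(L,\varphi,\xi,\eta,g)$ is an almost contact B-metric manifold, i.e. $\varphi\xi=0$, $\varphi^2=-\mathrm{Id}+\eta\otimes\xi$, $\eta\circ\varphi=0$, $\eta(\xi)=1$, $g(\varphi x,\varphi y)=-g(x,y)+\eta(x)\eta(y)$. Let $\nabla$ be the Levi-Civita connection of $g$, $F(x,y,z)=g((\nabla_x\varphi)y,z)$, and $F_{ijk}=F(E_i,E_j,E_k)$, $i,j,k\in\{0,1,2\}$. Classes (in dimension 3, with respect to this basis): the manifold belongs to $\mathcal{F}_1$ iff all $F_{ijk}$ vanish except possibly $F_{111}=F_{122}$ and $F_{211}=F_{222}$; $\mathcal{F}_4$ iff all vanish except possibly $F_{101}=F_{110}=-F_{202}=-F_{220}$; $\mathcal{F}_5$ iff all vanish except possibly $F_{102}=F_{120}=F_{201}=F_{210}$; $\mathcal{F}_8$ iff all vanish except possibly $F_{101}=F_{110}=F_{202}=F_{220}=:\lambda$;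 $\mathcal{F}_9$ iff all vanish except possibly $F_{102}=F_{120}=-F_{201}=-F_{210}=:\mu$; $\mathcal{F}_{10}$ iff all vanish except possibly $F_{011}=F_{022}=:\nu$; $\mathcal{F}_{11}$ iff all vanish except possibly $F_{010}=F_{001}$ and $F_{020}=F_{002}$. The manifold belongs to a direct sum $\mathcal{F}_{s_1}\oplus\dots\oplus\mathcal{F}_{s_m}$ iff $F$ is a sum of tensors each of which has the form required for the corresponding class $\mathcal{F}_{s_j}$. *)

From Stdlib Require Import Reals List.
Import ListNotations.
Open Scope R_scope.

Inductive idx : Type := i0 | i1 | i2.

(** A left-invariant vector field = its (constant) coefficient vector
    with respect to {E_0,E_1,E_2}. *)
Definition vec := idx -> R.

Definition sum3 (f : idx -> R) : R := f i0 + f i1 + f i2.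

Definition E (i : idx) : vec :=
  fun k => match i, k with
           | i0, i0 | i1, i1 | i2, i2 => 1
           | _, _ => 0
           end.

(** Structure constants: [E_i,E_j] = sum_k C i j k E_k. *)
Definition structure_constants := idx -> idx -> idx -> R.

Definition lie_bracket (C : structure_constants) (u v : vec) : vec :=
  fun k => sum3 (fun i => sum3 (fun j => u i * v j * C i j k)).

Definition is_lie_algebra (C : structure_constants) : Prop :=
  (forall i j k, C i j k = - C j i k) /\
  (forall i j l m,
      lie_bracket C (lie_bracket C (E i) (E j)) (E l) m
    + lie_bracket C (lie_bracket C (E j) (E l)) (E i) m
    + lie_bracket C (lie_bracket C (E l) (E i)) (E j) m = 0).

Definition gdiag (k : idx) : R := match k with i2 => -1 | _ => 1 end.
Definition g (u v : vec) : R := sum3 (fun k => gdiag k * u k * v k).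

Definition phi (u : vec) : vec :=
  fun k => match k with i0 => 0 | i1 => - u i2 | i2 => u i1 end.

(** Levi-Civita connection of the left-invariant metric g on left-invariant
    fields, given by the Koszul formula
      2 g(nabla_X Y, Z) = g([X,Y],Z) - g([Y,Z],X) + g([Z,X],Y). *)
Definition nabla (C : structure_constants) (u v : vec) : vec :=
  fun k => gdiag k *
    (g (lie_bracket C u v) (E k) - g (lie_bracket C v (E k)) u
     + g (lie_bracket C (E k) u) v) / 2.

(** F_{ijk} = F(E_i,E_j,E_k) = g((nabla_{E_i} phi) E_j, E_k). *)
Definition Ften (C : structure_constants) (i j k : idx) : R :=
  g (fun m => nabla C (E i) (phi (E j)) m - phi (nabla C (E i) (E j)) m) (E k).

Definition tensor3 := idx -> idx -> idx -> R.

Definition in_F1 (F : tensor3) : Prop :=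
  exists a b : R, forall i j k, F i j k =
    match i, j, k with
    | i1, i1, i1 | i1, i2, i2 => a
    | i2, i1, i1 | i2, i2, i2 => b
    | _, _, _ => 0 end.

Definition in_F4 (F : tensor3) : Prop :=
  exists a : R, forall i j k, F i j k =
    match i, j, k with
    | i1, i0, i1 | i1, i1, i0 => a
    | i2, i0, i2 | i2, i2, i0 => - a
    | _, _, _ => 0 end.

Definition in_F5 (F : tensor3) : Prop :=
  exists a : R, forall i j k, F i j k =
    match i, j, k with
    | i1, i0, i2 | i1, i2, i0 | i2, i0, i1 | i2, i1, i0 => a
    | _, _, _ => 0 end.

Definition in_F8 (F : tensor3) : Prop :=
  exists lambda : R, forall i j k, F i j k =
    match i, j, k with
    | i1, i0, i1 | i1, i1, i0 | i2, i0, i2 | i2, i2, i0 => lambda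
    | _, _, _ => 0 end.

Definition in_F9 (F : tensor3) : Prop :=
  exists mu : R, forall i j k, F i j k =
    match i, j, k with
    | i1, i0, i2 | i1, i2, i0 => mu
    | i2, i0, i1 | i2, i1, i0 => - mu
    | _, _, _ => 0 end.

Definition in_F10 (F : tensor3) : Prop :=
  exists nu : R, forall i j k, F i j k =
    match i, j, k with
    | i0, i1, i1 | i0, i2, i2 => nu
    | _, _, _ => 0 end.

Definition in_F11 (F : tensor3) : Prop :=
  exists a b : R, forall i j k, F i j k =
    match i, j, k with
    | i0, i1, i0 | i0, i0, i1 => a
    | i0, i2, i0 | i0, i0, i2 => b
    | _, _, _ => 0 end.

Definition in_class (s : nat) (F : tensor3) : Prop :=
  match s with
  | 1%nat => in_F1 F
  | 4%nat => in_F4 F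
  | 5%nat => in_F5 F
  | 8%nat => in_F8 F
  | 9%nat => in_F9 F
  | 10%nat => in_F10 F
  | 11%nat => in_F11 F
  | _ => False
  end.

Definition bracket_is (C : structure_constants) (i j : idx) (x0 x1 x2 : R) : Prop :=
  C i j i0 = x0 /\ C i j i1 = x1 /\ C i j i2 = x2.

Definition commutators (s : nat) (C : structure_constants) (alpha beta : R) : Prop :=
  match s with
  | 1%nat => bracket_is C i0 i1 0 0 0 /\ bracket_is C i0 i2 0 0 0
             /\ bracket_is C i1 i2 0 alpha beta
  | 4%nat => bracket_is C i0 i1 0 0 alpha /\ bracket_is C i0 i2 0 (- alpha) 0
             /\ bracket_is C i1 i2 0 0 0
  | 5%nat => bracket_is C i0 i1 0 alpha 0 /\ bracket_is C i0 i2 0 0 alpha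
             /\ bracket_is C i1 i2 0 0 0
  | 8%nat => bracket_is C i0 i1 0 0 alpha /\ bracket_is C i0 i2 0 alpha 0
             /\ bracket_is C i1 i2 (-2 * alpha) 0 0
  | 9%nat => bracket_is C i0 i1 0 alpha 0 /\ bracket_is C i0 i2 0 0 (- alpha)
             /\ bracket_is C i1 i2 0 0 0
  | 10%nat => bracket_is C i0 i1 0 0 alpha /\ bracket_is C i0 i2 0 alpha 0
              /\ bracket_is C i1 i2 0 0 0
  | 11%nat => bracket_is C i0 i1 alpha 0 0 /\ bracket_is C i0 i2 beta 0 0
              /\ bracket_is C i1 i2 0 0 0
  | _ => False
  end.

From Stdlib Require Import Reals List Lra.
Import ListNotations.
Open Scope R_scope.

(* By the Koszul formula every component F_ijk is a linear combination of the
   nine structure constants C_01^k, C_02^k, C_12^k, the others being fixed by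
   antisymmetry.  Each class F_s is cut out
   by linear conditions on the F_ijk, and these translate into the listed
   commutator relations; the parameters alpha, beta are read off from the
   components of F and conversely. *)

Definition Ften_coords (C : structure_constants) (i j k : idx) : R :=
  let S := C i0 i1 i2 + C i0 i2 i1 + C i1 i2 i0 in
  let P := - C i0 i1 i2 + C i0 i2 i1 + C i1 i2 i0 in
  let Q := C i0 i1 i2 - C i0 i2 i1 + C i1 i2 i0 in
  match i, j, k with
  | i0, i0, i1 | i0, i1, i0 => C i0 i2 i0
  | i0, i0, i2 | i0, i2, i0 => - C i0 i1 i0
  | i0, i1, i1 | i0, i2, i2 => S
  | i1, i0, i1 | i1, i1, i0 => P / 2
  | i1, i0, i2 | i1, i2, i0 => - C i0 i1 i1
  | i1, i1, i1 | i1, i2, i2 => 2 * C i1 i2 i1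
  | i2, i0, i1 | i2, i1, i0 => - C i0 i2 i2
  | i2, i0, i2 | i2, i2, i0 => Q / 2
  | i2, i1, i1 | i2, i2, i2 => -2 * C i1 i2 i2
  | _, _, _ => 0
  end.

Ltac specialize_all_idx H :=
  let pose3 := fun i j =>
    pose proof (H i j i0); pose proof (H i j i1); pose proof (H i j i2) in
  let pose9 := fun i => pose3 i i0; pose3 i i1; pose3 i i2 in
  pose9 i0; pose9 i1; pose9 i2; clear H.

Section Classes.

Variable C : structure_constants.
Hypothesis C_antisym : forall i j k, C i j k = - C j i k.

Lemma Ften_explicit (i j k : idx) : Ften C i j k = Ften_coords C i j k.
Proof.
  assert (C_diag : forall i k, C i i k = 0)
    by (intros i' k'; pose proof (C_antisym i' i' k'); lra).
  assert (C10 : forall k, C i1 i0 k = - C i0 i1 k) by (intros; apply C_antisym).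
  assert (C20 : forall k, C i2 i0 k = - C i0 i2 k) by (intros; apply C_antisym).
  assert (C21 : forall k, C i2 i1 k = - C i1 i2 k) by (intros; apply C_antisym).
  destruct i, j, k;
    unfold Ften, Ften_coords, nabla, g, lie_bracket, sum3, phi, E, gdiag;
    rewrite ?C_diag, ?C10, ?C20, ?C21; field.
Qed.

Ltac class_to_commutators H a b :=
  specialize_all_idx H; rewrite !Ften_explicit in *;
  unfold Ften_coords in *; simpl in *; exists a, b; repeat split; lra.

Ltac commutators_to_class :=
  intros i j k; rewrite Ften_explicit; destruct i, j, k;
  unfold Ften_coords; simpl; lra.

Lemma in_F1_iff : in_F1 (Ften C) <-> exists a b, commutators 1 C a b.
Proof.
  unfold in_F1, commutators, bracket_is; split.
  - intros [a [b H]]; class_to_commutators H (C i1 i2 i1) (C i1 i2 i2).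
  - intros [a [b H]]; exists (2 * a), (-2 * b); commutators_to_class.
Qed.

Lemma in_F4_iff : in_F4 (Ften C) <-> exists a b, commutators 4 C a b.
Proof.
  unfold in_F4, commutators, bracket_is; split.
  - intros [a H]; class_to_commutators H (C i0 i1 i2) 0.
  - intros [a [_ H]]; exists (- a); commutators_to_class.
Qed.

Lemma in_F5_iff : in_F5 (Ften C) <-> exists a b, commutators 5 C a b.
Proof.
  unfold in_F5, commutators, bracket_is; split.
  - intros [a H]; class_to_commutators H (C i0 i1 i1) 0.
  - intros [a [_ H]]; exists (- a); commutators_to_class.
Qed.

Lemma in_F8_iff : in_F8 (Ften C) <-> exists a b, commutators 8 C a b.
Proof.
  unfold in_F8, commutators, bracket_is; split.
  - intros [l H]; class_to_commutators H (C i0 i1 i2) 0.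
  - intros [a [_ H]]; exists (- a); commutators_to_class.
Qed.

Lemma in_F9_iff : in_F9 (Ften C) <-> exists a b, commutators 9 C a b.
Proof.
  unfold in_F9, commutators, bracket_is; split.
  - intros [m H]; class_to_commutators H (C i0 i1 i1) 0.
  - intros [a [_ H]]; exists (- a); commutators_to_class.
Qed.

Lemma in_F10_iff : in_F10 (Ften C) <-> exists a b, commutators 10 C a b.
Proof.
  unfold in_F10, commutators, bracket_is; split.
  - intros [n H]; class_to_commutators H (C i0 i1 i2) 0.
  - intros [a [_ H]]; exists (2 * a); commutators_to_class.
Qed.

Lemma in_F11_iff : in_F11 (Ften C) <-> exists a b, commutators 11 C a b.
Proof.
  unfold in_F11, commutators, bracket_is; split.
  - intros [a [b H]]; class_to_commutators H (C i0 i1 i0) (C i0 i2 i0).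
  - intros [a [b H]]; exists b, (- a); commutators_to_class.
Qed.

End Classes.

Theorem theorem2p1 (C : structure_constants) (HC : is_lie_algebra C) (s : nat)
  (Hs : In s [1; 4; 5; 8; 9; 10; 11]%nat) :
  in_class s (Ften C) <-> exists alpha beta : R, commutators s C alpha beta.
Proof.
  destruct HC as [C_antisym _].
  simpl in Hs; destruct Hs as [<-|[<-|[<-|[<-|[<-|[<-|[<-|[]]]]]]]].
  - exact (in_F1_iff C C_antisym).
  - exact (in_F4_iff C C_antisym).
  - exact (in_F5_iff C C_antisym).
  - exact (in_F8_iff C C_antisym).
  - exact (in_F9_iff C C_antisym).
  - exact (in_F10_iff C C_antisym).
  - exact (in_F11_iff C C_antisym).
Qed.
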